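(* Let $d\in C^1(\mathbb{R})$ with $d(0)=0$, $d'(m)>d_0$ and $|d'(m)|\le d_1+d_2|m|^p$ for all $m\in\mathbb{R}$, for constants $d_0>0$, $d_1,d_2,p\ge0$. Let $\bar f,\bar g\in L^2(0,1)$, $\bar h=(\bar h(0),\bar h(1))\in\mathbb{R}^2$, $T>0$, and let $(p,m)$ be a smooth solution on $(0,1)\times[0,T]$ of $$\partial_t p+\partial_x m=\bar f,\qquad \partial_t m+\partial_x p+d(m)=\bar g\quad\text{in }(0,1)\times[0,T],\qquad p(x,t)=\bar h(x)\ \text{for }x\in\{0,1\},\ t\in[0,T].$$ Then for all $t\in[0,T]$, $$\|\partial_t p(t)\|_{L^2}+\|\partial_t m(t)\|_{L^2}+\|m(t)\|_{H^1}\le c,$$ where the constant $c$ depends only on $\|\bar f\|_{L^2},\|\bar g\|_{L^2},|\bar h|_1,\|p(0)\|_{H^1},\|m(0)\|_{H^1}$, and not on $t$ or $T$.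
   Context: $p(t)$, $m(t)$ denote the functions $x\mapsto p(x,t)$, $x\mapsto m(x,t)$. $|\bar h|_1=|\bar h(0)|+|\bar h(1)|$. The conditions on $d$ are the paper's standing assumption on the damping function in this system. *)

From Stdlib Require Import Reals.
From Coquelicot Require Import Coquelicot.
Open Scope R_scope.

(* |x|^q for real exponent q >= 0, with the convention 0^q = 0 (q>0), 0^0 = 1. *)
Definition rpow (x q : R) : R :=
  if Req_EM_T x 0 then (if Req_EM_T q 0 then 1 else 0) else Rpower x q.

Fixpoint Ck2 (k : nat) (u : R -> R -> R) : Prop :=
  (forall z : R * R, continuous (fun w : R * R => u (fst w) (snd w)) z) /\
  match k with
  | O => True
  | S k' =>
      (forall x t, ex_derive (fun y => u y t) x) /\
      (forall x t, ex_derive (fun s => u x s) t) /\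
      Ck2 k' (fun x t => Derive (fun y => u y t) x) /\
      Ck2 k' (fun x t => Derive (fun s => u x s) t)
  end.

Definition smooth2 (u : R -> R -> R) : Prop := forall k, Ck2 k u.

Definition dx (u : R -> R -> R) (x t : R) : R := Derive (fun y => u y t) x.
Definition dt (u : R -> R -> R) (x t : R) : R := Derive (fun s => u x s) t.

Definition L2norm (f : R -> R) : R := sqrt (RInt (fun x => (f x)^2) 0 1).
Definition H1norm (f : R -> R) : R :=
  sqrt (RInt (fun x => (f x)^2 + (Derive f x)^2) 0 1).

From Stdlib Require Import Reals Lra.
From Coquelicot Require Import Coquelicot.
Open Scope R_scope.

(* The energy [E(t) = RInt (p_t^2 + m_t^2)] is nonincreasing: differentiating
   the equations in time, [E'] is minus twice the integral of [(p_t m_t)_x +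
   d'(m) m_t^2]; the first term integrates to the boundary values of [p_t m_t],
   which vanish because [p] is constant in time at [x = 0, 1], and the second is
   nonnegative.  [E(0)] is controlled by the data through the equations at
   [t = 0] and the embedding of H^1 into L^oo.  Then [m_x = f - p_t] bounds the
   H^1 seminorm of [m(t)], hence its oscillation; integrating the second
   equation in [x] bounds [RInt d(m(t))] by the data and [E(t)], and since [d]
   grows at rate at least [d0] this keeps [m(t)] uniformly bounded. *)

Definition jointly_continuous (u : R -> R -> R) : Prop :=
  forall z : R * R, continuous (fun w : R * R => u (fst w) (snd w)) z.

Lemma Ck2_jointly_continuous k u : Ck2 k u -> jointly_continuous u.
Proof. destruct k; intros [H _]; exact H. Qed.

Lemma Ck2_S_dx k u : Ck2 (S k) u -> Ck2 k (dx u).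
Proof. intros (_ & _ & _ & H & _); exact H. Qed.

Lemma Ck2_S_dt k u : Ck2 (S k) u -> Ck2 k (dt u).
Proof. intros (_ & _ & _ & _ & H); exact H. Qed.

Lemma Ck2_S_Ck2 k u : Ck2 (S k) u -> Ck2 k u.
Proof.
  revert u. induction k as [| k IH]; intros u (Hu & Hx & Ht & Hdx & Hdt).
  - split; [exact Hu | exact I].
  - exact (conj Hu (conj Hx (conj Ht (conj (IH _ Hdx) (IH _ Hdt))))).
Qed.

Lemma Ck2_S_ex_derive_x k u x t : Ck2 (S k) u -> ex_derive (fun y => u y t) x.
Proof. intros (_ & H & _); apply H. Qed.

Lemma Ck2_S_ex_derive_t k u x t : Ck2 (S k) u -> ex_derive (fun s => u x s) t.
Proof. intros (_ & _ & H & _); apply H. Qed.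

Lemma jointly_continuous_x u t x : jointly_continuous u -> continuous (fun y => u y t) x.
Proof.
  intros H. apply (continuous_comp_2 (fun y => y) (fun _ => t) u).
  - apply continuous_id.
  - apply continuous_const.
  - apply H.
Qed.

Lemma jointly_continuous_2d u x t : jointly_continuous u -> continuity_2d_pt u x t.
Proof. intros H. apply continuity_2d_pt_filterlim, (H (x, t)). Qed.

Lemma jointly_continuous_swap_2d u x t :
  jointly_continuous u -> continuity_2d_pt (fun a b => u b a) t x.
Proof.
  intros H eps. destruct (jointly_continuous_2d u x t H eps) as [delta Hd].
  exists delta. intros a b Ha Hb. apply Hd; assumption.
Qed.

Lemma Ck2_S_Derive_x_continuous k u t x :
  Ck2 (S k) u -> continuous (Derive (fun y => u y t)) x.
Proof. intros Hu. apply (jointly_continuous_x (dx u)), (Ck2_jointly_continuous k), Ck2_S_dx, Hu. Qed.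

#[export] Hint Resolve Ck2_jointly_continuous Ck2_S_dx Ck2_S_dt
  Ck2_S_ex_derive_x Ck2_S_ex_derive_t Ck2_S_Derive_x_continuous : regularity.

Lemma continuous_Rplus (f g : R -> R) x :
  continuous f x -> continuous g x -> continuous (fun y => f y + g y) x.
Proof. intros Hf Hg; exact (continuous_plus f g x Hf Hg). Qed.

Lemma continuous_Rminus (f g : R -> R) x :
  continuous f x -> continuous g x -> continuous (fun y => f y - g y) x.
Proof. intros Hf Hg; exact (continuous_minus f g x Hf Hg). Qed.

Lemma continuous_Rmult (f g : R -> R) x :
  continuous f x -> continuous g x -> continuous (fun y => f y * g y) x.
Proof. intros Hf Hg; exact (continuous_mult f g x Hf Hg). Qed.

Lemma continuous_Ropp (f : R -> R) x : continuous f x -> continuous (fun y => - f y) x.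
Proof. intros Hf; exact (continuous_opp f x Hf). Qed.

Lemma continuous_Rsqr (f : R -> R) x : continuous f x -> continuous (fun y => f y ^ 2) x.
Proof.
  intros H. apply continuous_ext with (f := fun y => f y * f y).
  - intros y; simpl; ring.
  - now apply continuous_Rmult.
Qed.

Lemma continuous_Rabs x : continuous Rabs x.
Proof. apply continuity_pt_filterlim, Rcontinuity_abs. Qed.

#[export] Hint Resolve continuous_Rabs : regularity.

Ltac continuity_step :=
  match goal with
  | |- continuous (fun _ => ?c) _ => apply continuous_const
  | |- continuous (fun y => y) _ => apply continuous_id
  | |- continuous (fun y => @?a y + @?b y) _ => apply (continuous_Rplus a b)
  | |- continuous (fun y => @?a y - @?b y) _ => apply (continuous_Rminus a b)
  | |- continuous (fun y => @?a y * @?b y) _ => apply (continuous_Rmult a b)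
  | |- continuous (fun y => - @?a y) _ => apply (continuous_Ropp a)
  | |- continuous (fun y => @?a y ^ 2) _ => apply (continuous_Rsqr a)
  | |- continuous (fun y => ?u y ?t) _ => apply (jointly_continuous_x u t)
  | |- continuous (fun y => ?g (@?h y)) _ => apply (continuous_comp h g)
  end.

Ltac auto_cont :=
  repeat (first [solve [eauto with regularity] | continuity_step]; cbv beta).

Lemma ex_RInt_cont (f : R -> R) a b : (forall x, continuous f x) -> ex_RInt f a b.
Proof. intros H. apply (ex_RInt_continuous (V := R_CompleteNormedModule)); auto. Qed.

Ltac ex_RInt_auto := apply ex_RInt_cont; intro; auto_cont.

Lemma RInt_const01 (c : R) : RInt (fun _ => c) 0 1 = c.
Proof. rewrite RInt_const. unfold scal; simpl; unfold mult; simpl. ring. Qed.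

Lemma RInt_Rplus (f g : R -> R) a b : ex_RInt f a b -> ex_RInt g a b ->
  RInt (fun x => f x + g x) a b = RInt f a b + RInt g a b.
Proof. intros Hf Hg; exact (RInt_plus f g a b Hf Hg). Qed.

Lemma RInt_Rminus (f g : R -> R) a b : ex_RInt f a b -> ex_RInt g a b ->
  RInt (fun x => f x - g x) a b = RInt f a b - RInt g a b.
Proof. intros Hf Hg; exact (RInt_minus f g a b Hf Hg). Qed.

Lemma RInt_Rmult_l (f : R -> R) a b k : ex_RInt f a b ->
  RInt (fun x => k * f x) a b = k * RInt f a b.
Proof. intros Hf; exact (RInt_scal f a b k Hf). Qed.

Lemma RInt01_le (f g : R -> R) :
  (forall x, continuous f x) -> (forall x, continuous g x) ->
  (forall x, 0 <= x <= 1 -> f x <= g x) -> RInt f 0 1 <= RInt g 0 1.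
Proof.
  intros Hf Hg Hfg. apply RInt_le; try lra; try (apply ex_RInt_cont; assumption).
  intros x Hx; apply Hfg; lra.
Qed.

Lemma RInt01_le_const (f : R -> R) c :
  (forall x, continuous f x) -> (forall x, 0 <= x <= 1 -> f x <= c) -> RInt f 0 1 <= c.
Proof.
  intros Hf Hc. rewrite <- (RInt_const01 c).
  apply RInt01_le; auto. intros; apply continuous_const.
Qed.

Lemma RInt01_const_le (f : R -> R) c :
  (forall x, continuous f x) -> (forall x, 0 <= x <= 1 -> c <= f x) -> c <= RInt f 0 1.
Proof.
  intros Hf Hc. rewrite <- (RInt_const01 c).
  apply RInt01_le; auto. intros; apply continuous_const.
Qed.

Lemma RInt_sq_ge0 (f : R -> R) : (forall x, continuous f x) -> 0 <= RInt (fun x => f x ^ 2) 0 1.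
Proof.
  intros Hf. apply RInt_ge_0; try lra.
  - ex_RInt_auto.
  - intros; apply pow2_ge_0.
Qed.

Lemma RInt_le_RInt01 (g : R -> R) a b : 0 <= a <= b -> b <= 1 ->
  (forall z, continuous g z) -> (forall z, 0 <= g z) -> RInt g a b <= RInt g 0 1.
Proof.
  intros Hab Hb Hc Hg.
  rewrite <- (RInt_Chasles g 0 a 1), <- (RInt_Chasles g a b 1) by (apply ex_RInt_cont; auto).
  assert (0 <= RInt g 0 a) by (apply RInt_ge_0; try lra; auto; apply ex_RInt_cont; auto).
  assert (0 <= RInt g b 1) by (apply RInt_ge_0; try lra; auto; apply ex_RInt_cont; auto).
  simpl. unfold plus; simpl. lra.
Qed.

Lemma Rabs_le_half_sq (y : R) : Rabs y <= / 2 + / 2 * y ^ 2.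
Proof.
  rewrite <- (pow2_abs y). pose proof (pow2_ge_0 (Rabs y - 1)). nra.
Qed.

Lemma Rabs_RInt01_le_sq (g : R -> R) : (forall x, continuous g x) ->
  Rabs (RInt g 0 1) <= / 2 + / 2 * RInt (fun x => g x ^ 2) 0 1.
Proof.
  intros Hg. eapply Rle_trans; [apply abs_RInt_le; [lra | apply ex_RInt_cont; auto] |].
  eapply Rle_trans.
  - apply (RInt01_le _ (fun x => / 2 + / 2 * g x ^ 2)); intros; auto_cont.
    apply Rabs_le_half_sq.
  - rewrite RInt_Rplus, RInt_const01, RInt_Rmult_l by ex_RInt_auto. lra.
Qed.

Lemma RInt_sq_sub_le (f g : R -> R) :
  (forall x, continuous f x) -> (forall x, continuous g x) ->
  RInt (fun x => (f x - g x) ^ 2) 0 1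
    <= 2 * RInt (fun x => f x ^ 2) 0 1 + 2 * RInt (fun x => g x ^ 2) 0 1.
Proof.
  intros Hf Hg. rewrite <- !RInt_Rmult_l, <- RInt_Rplus by ex_RInt_auto.
  apply RInt01_le; intros; auto_cont. pose proof (pow2_ge_0 (f x + g x)). nra.
Qed.

Lemma RInt_sq_sub3_le (f g h : R -> R) :
  (forall x, continuous f x) -> (forall x, continuous g x) -> (forall x, continuous h x) ->
  RInt (fun x => (f x - g x - h x) ^ 2) 0 1
    <= 3 * (RInt (fun x => f x ^ 2) 0 1 + RInt (fun x => g x ^ 2) 0 1
            + RInt (fun x => h x ^ 2) 0 1).
Proof.
  intros Hf Hg Hh. rewrite <- !RInt_Rplus, <- RInt_Rmult_l by ex_RInt_auto.
  apply RInt01_le; intros; auto_cont.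
  pose proof (pow2_ge_0 (f x + g x)). pose proof (pow2_ge_0 (f x + h x)).
  pose proof (pow2_ge_0 (g x - h x)). nra.
Qed.

Section OneDimensionalEmbedding.

Variable f : R -> R.
Hypothesis f_derivable : forall x, ex_derive f x.
Hypothesis f'_continuous : forall x, continuous (Derive f) x.

Lemma f_continuous x : continuous f x.
Proof. apply (ex_derive_continuous (K := R_AbsRing) (V := R_NormedModule)), f_derivable. Qed.

Hint Resolve f_continuous : regularity.

Lemma Rabs_sub_le_RInt_Derive_sq x y : 0 <= x <= 1 -> 0 <= y <= 1 ->
  Rabs (f x - f y) <= (1 + RInt (fun z => Derive f z ^ 2) 0 1) / 2.
Proof.
  set (g := fun z => / 2 + / 2 * Derive f z ^ 2).
  assert (Hg : forall z, continuous g z) by (intro; unfold g; auto_cont).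
  assert (Hint : RInt g 0 1 = (1 + RInt (fun z => Derive f z ^ 2) 0 1) / 2).
  { unfold g. rewrite RInt_Rplus, RInt_const01, RInt_Rmult_l by ex_RInt_auto. lra. }
  assert (Hle : forall a b, 0 <= a <= b -> b <= 1 -> Rabs (f b - f a) <= RInt g 0 1).
  { intros a b Hab Hb.
    rewrite <- RInt_Derive by auto.
    eapply Rle_trans; [apply abs_RInt_le; [lra | ex_RInt_auto] |].
    eapply Rle_trans; [apply RInt_le with (g := g); [lra | ex_RInt_auto | ex_RInt_auto |] |].
    - intros z _. apply Rabs_le_half_sq.
    - apply RInt_le_RInt01; auto. intro z. unfold g. pose proof (pow2_ge_0 (Derive f z)). lra. }
  rewrite <- Hint. intros Hx Hy. destruct (Rle_dec y x).
  - apply Hle; lra.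
  - rewrite Rabs_minus_sym. apply Hle; lra.
Qed.

Lemma H1norm_sq : H1norm f ^ 2 = RInt (fun x => f x ^ 2) 0 1 + RInt (fun x => Derive f x ^ 2) 0 1.
Proof.
  unfold H1norm. rewrite <- RInt_Rplus by ex_RInt_auto.
  apply pow2_sqrt. apply RInt_ge_0; try lra; [ex_RInt_auto |].
  intros x _. pose proof (pow2_ge_0 (f x)). pose proof (pow2_ge_0 (Derive f x)). lra.
Qed.

Lemma Rabs_le_H1norm x : 0 <= x <= 1 -> Rabs (f x) <= 1 + H1norm f ^ 2.
Proof.
  intros Hx. rewrite H1norm_sq.
  assert (Havg : Rabs (f x) <= RInt (fun y => / 2 + / 2 * f y ^ 2
                                       + (1 + RInt (fun z => Derive f z ^ 2) 0 1) / 2) 0 1).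
  { apply RInt01_const_le; [intro; auto_cont |]. intros y Hy.
    pose proof (Rabs_sub_le_RInt_Derive_sq x y Hx Hy).
    pose proof (Rabs_triang_inv (f x) (f y)). pose proof (Rabs_le_half_sq (f y)). lra. }
  rewrite RInt_Rplus, RInt_Rplus, !RInt_const01, RInt_Rmult_l in Havg by ex_RInt_auto.
  pose proof (RInt_sq_ge0 f f_continuous).
  pose proof (RInt_sq_ge0 (Derive f) f'_continuous). lra.
Qed.

End OneDimensionalEmbedding.

Lemma L2norm_sq_ext (f g : R -> R) : (forall x, 0 < x < 1 -> f x = g x) ->
  (forall x, continuous g x) -> L2norm f ^ 2 = RInt (fun x => g x ^ 2) 0 1.
Proof.
  intros Hfg Hg. unfold L2norm.
  rewrite (RInt_ext _ (fun x => g x ^ 2)).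
  - apply pow2_sqrt, RInt_sq_ge0; auto.
  - intros x Hx. rewrite Rmin_left, Rmax_right in Hx by lra. rewrite Hfg; auto.
Qed.

Lemma sqrt_le_1_plus x y : x <= y -> 0 <= y -> sqrt x <= 1 + y.
Proof.
  intros Hxy Hy. eapply Rle_trans; [apply sqrt_le_1_alt; eauto |].
  pose proof (pow2_sqrt y Hy). pose proof (sqrt_pos y). nra.
Qed.

Lemma RInt_dx_sq_le_H1norm u t : Ck2 1 u ->
  RInt (fun x => dx u x t ^ 2) 0 1 <= H1norm (fun x => u x t) ^ 2.
Proof.
  intros Hu. rewrite H1norm_sq by eauto with regularity.
  pose proof (RInt_sq_ge0 (fun x => u x t) ltac:(intro; auto_cont)). unfold dx; lra.
Qed.

Section Damping.

Variables (d : R -> R) (d0 : R).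
Hypothesis d_derivable : forall y, ex_derive d y.
Hypothesis d'_gt : forall y, Derive d y > d0.
Hypothesis d0_pos : 0 < d0.

Lemma d_continuous y : continuous d y.
Proof. apply (ex_derive_continuous (K := R_AbsRing) (V := R_NormedModule)), d_derivable. Qed.

Hint Resolve d_continuous : regularity.

Lemma d_increment_ge x y : x <= y -> d0 * (y - x) <= d y - d x.
Proof.
  intros Hxy. destruct (Req_dec x y) as [<- | Hne]; [lra |].
  destruct (MVT_cor2 d (Derive d) x y) as [c [Hc _]]; [lra | |].
  - intros c _. apply is_derive_Reals, Derive_correct, d_derivable.
  - rewrite Hc. specialize (d'_gt c). nra.
Qed.

Lemma d_sq_le K y : Rabs y <= K -> d y ^ 2 <= d K ^ 2 + d (- K) ^ 2.
Proof.
  intros Hy. assert (- K <= y <= K) by (apply Rabs_le_between; exact Hy).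
  assert (d y <= d K) by (pose proof (d_increment_ge y K ltac:(lra)); nra).
  assert (d (- K) <= d y) by (pose proof (d_increment_ge (- K) y ltac:(lra)); nra).
  pose proof (pow2_ge_0 (d K)). pose proof (pow2_ge_0 (d (- K))).
  destruct (Rle_dec 0 (d y)); nra.
Qed.

Hypothesis d_zero : d 0 = 0.

(* A function whose oscillation is at most [K] cannot stay far from [0]:
   the monotone [d] would then make [RInt (d o f)] large. *)
Lemma Rabs_le_of_osc_RInt_d (f : R -> R) K B :
  (forall x, continuous f x) ->
  (forall x, 0 <= x <= 1 -> Rabs (f x - f 0) <= K) ->
  Rabs (RInt (fun x => d (f x)) 0 1) <= B ->
  forall x, 0 <= x <= 1 -> Rabs (f x) <= 2 * K + B / d0.
Proof.
  intros Hf Hosc HB x Hx.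
  assert (Hdiv : d0 * (B / d0) = B) by (field; lra).
  assert (HB0 : 0 <= B / d0).
  { pose proof (Rabs_pos (RInt (fun x => d (f x)) 0 1)). nra. }
  assert (Hrange : forall y, 0 <= y <= 1 -> f 0 - K <= f y <= f 0 + K).
  { intros y Hy. apply Rabs_le_between'. exact (Hosc y Hy). }
  assert (Hf0 : Rabs (f 0) <= K + B / d0).
  { apply Rabs_le_between. split.
    - destruct (Rle_dec (- K) (f 0)); [lra |].
      assert (Hup : RInt (fun y => d (f y)) 0 1 <= d0 * (f 0 + K)).
      { apply RInt01_le_const; [intro; auto_cont |]. intros y Hy.
        specialize (Hrange y Hy). pose proof (d_increment_ge (f y) 0 ltac:(lra)). nra. }
      pose proof (proj1 (Rabs_le_between _ _) HB). nra.
    - destruct (Rle_dec (f 0) K); [lra |].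
      assert (Hlow : d0 * (f 0 - K) <= RInt (fun y => d (f y)) 0 1).
      { apply RInt01_const_le; [intro; auto_cont |]. intros y Hy.
        specialize (Hrange y Hy). pose proof (d_increment_ge 0 (f y) ltac:(lra)). nra. }
      pose proof (proj1 (Rabs_le_between _ _) HB). nra. }
  pose proof (Rabs_triang (f x - f 0) (f 0)). pose proof (Hosc x Hx).
  replace (f x - f 0 + f 0) with (f x) in * by ring. lra.
Qed.

End Damping.

#[export] Hint Resolve d_continuous : regularity.

Lemma dx_dt_comm u x t : Ck2 2 u -> dx (dt u) x t = dt (dx u) x t.
Proof.
  intros Hu. apply Schwarz.
  - exists (mkposreal 1 Rlt_0_1). intros a b _ _.
    refine (conj _ (conj _ (conj (Ck2_S_ex_derive_x 0 (dt u) a b _)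
                                  (Ck2_S_ex_derive_t 0 (dx u) a b _))));
      eauto with regularity.
  - apply (jointly_continuous_2d (dx (dt u))); eauto with regularity.
  - apply (jointly_continuous_2d (dt (dx u))); eauto with regularity.
Qed.

Lemma dt_eq_interior u w x T c :
  (forall s, 0 <= s <= T -> u x s = w x s) -> 0 < c < T -> dt u x c = dt w x c.
Proof.
  intros Huw Hc. apply Derive_ext_loc.
  apply (filter_imp (fun s => 0 <= s <= T)); [intros s Hs; auto |].
  apply (locally_interval _ c 0 T); simpl; try lra. intros; lra.
Qed.

Definition energy (u v : R -> R -> R) (t : R) : R :=
  RInt (fun x => dt u x t ^ 2 + dt v x t ^ 2) 0 1.

Lemma is_derive_energy u v s : Ck2 2 u -> Ck2 2 v ->
  is_derive (energy u v) s
    (RInt (fun x => 2 * (dt u x s * dt (dt u) x s + dt v x s * dt (dt v) x s)) 0 1).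
Proof.
  intros Hu Hv.
  set (G := fun s x => dt u x s ^ 2 + dt v x s ^ 2).
  assert (HdG : forall s x, Derive (fun s' => G s' x) s
                           = 2 * (dt u x s * dt (dt u) x s + dt v x s * dt (dt v) x s)).
  { intros s' x. apply is_derive_unique. unfold G. auto_derive.
    - split; eauto with regularity.
    - unfold dt; ring. }
  rewrite <- (RInt_ext (fun x => Derive (fun s' => G s' x) s)) by (intros; apply HdG).
  apply (is_derive_RInt_param G 0 1 s).
  - apply filter_forall. intros s' x _. unfold G. auto_derive. split; eauto with regularity.
  - intros x _.
    apply continuity_2d_pt_ext with
      (f := fun a b => 2 * (dt u b a * dt (dt u) b a + dt v b a * dt (dt v) b a)).
    + intros a b; symmetry; apply HdG.
    + repeat first [apply continuity_2d_pt_plus | apply continuity_2d_pt_mult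
                   | apply continuity_2d_pt_const];
        apply jointly_continuous_swap_2d; eauto with regularity.
  - apply filter_forall. intros s'. apply ex_RInt_cont. intro. unfold G. auto_cont.
Qed.

Lemma energy_split u v t : jointly_continuous (dt u) -> jointly_continuous (dt v) ->
  energy u v t = RInt (fun x => dt u x t ^ 2) 0 1 + RInt (fun x => dt v x t ^ 2) 0 1.
Proof.
  intros Hu Hv. unfold energy.
  apply RInt_Rplus; apply ex_RInt_cont; intro; apply continuous_Rsqr, jointly_continuous_x; auto.
Qed.

(* From [p_t = f - m_x] and [m_t = g - p_x - d(m)] at [t = 0], with
   [|m(x, 0)| <= 1 + M^2]. *)
Definition initial_energy_bound (d : R -> R) (a b P M : R) : R :=
  2 * a ^ 2 + 2 * M ^ 2 + 3 * (b ^ 2 + P ^ 2 + (d (1 + M ^ 2) ^ 2 + d (- (1 + M ^ 2)) ^ 2)).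

(* [E] bounds the energy, [D] the integral of [m_x^2] and [S] the supremum of
   [|m|]. *)
Definition solution_bound (d : R -> R) (d0 a b c P M : R) : R :=
  let E := initial_energy_bound d a b P M in
  let D := 2 * a ^ 2 + 2 * E in
  let S := 1 + D + (1 + (b ^ 2 + E) / 2 + c) / d0 in
  2 * (1 + E) + 1 + S ^ 2 + D.

Section DampedWaveSolution.

Variables (d : R -> R) (d0 : R).
Hypothesis d_derivable : forall y, ex_derive d y.
Hypothesis d'_continuous : forall y, continuous (Derive d) y.
Hypothesis d'_gt : forall y, Derive d y > d0.
Hypothesis d0_pos : 0 < d0.
Hypothesis d_zero : d 0 = 0.

Variables (fb gb : R -> R) (h0 h1 T : R) (p m : R -> R -> R).
Hypothesis p_C2 : Ck2 2 p.
Hypothesis m_C2 : Ck2 2 m.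
Hypothesis mass_eq : forall x t, 0 < x < 1 -> 0 <= t <= T -> dt p x t + dx m x t = fb x.
Hypothesis momentum_eq :
  forall x t, 0 < x < 1 -> 0 <= t <= T -> dt m x t + dx p x t + d (m x t) = gb x.
Hypothesis boundary : forall t, 0 <= t <= T -> p 0 t = h0 /\ p 1 t = h1.

Hint Resolve p_C2 m_C2 d_derivable d'_continuous : regularity.

Lemma dt_p_boundary c : 0 < c < T -> dt p 0 c = 0 /\ dt p 1 c = 0.
Proof.
  intros Hc. split.
  - rewrite (dt_eq_interior p (fun _ _ => h0) 0 T c); [apply (Derive_const h0) | | exact Hc].
    intros s Hs; apply boundary, Hs.
  - rewrite (dt_eq_interior p (fun _ _ => h1) 1 T c); [apply (Derive_const h1) | | exact Hc].
    intros s Hs; apply boundary, Hs.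
Qed.

Lemma dt_dt_p x c : 0 < x < 1 -> 0 < c < T -> dt (dt p) x c = - dx (dt m) x c.
Proof.
  intros Hx Hc.
  rewrite (dt_eq_interior (dt p) (fun x s => fb x - dx m x s) x T c), dx_dt_comm by
    (auto; intros s Hs; rewrite <- (mass_eq x s Hx Hs); ring).
  apply is_derive_unique. auto_derive; eauto with regularity. unfold dt; ring.
Qed.

Lemma dt_dt_m x c : 0 < x < 1 -> 0 < c < T ->
  dt (dt m) x c = - dx (dt p) x c - Derive d (m x c) * dt m x c.
Proof.
  intros Hx Hc.
  rewrite (dt_eq_interior (dt m) (fun x s => gb x - dx p x s - d (m x s)) x T c), dx_dt_comm by
    (auto; intros s Hs; rewrite <- (momentum_eq x s Hx Hs); ring).
  apply is_derive_unique. auto_derive.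
  - split; eauto with regularity.
  - unfold dt. change (fun y => d y) with d. ring.
Qed.

Lemma RInt_flux_zero c : 0 < c < T ->
  RInt (fun x => dx (dt p) x c * dt m x c + dt p x c * dx (dt m) x c) 0 1 = 0.
Proof.
  intros Hc.
  assert (Hflux : is_RInt (fun x => dx (dt p) x c * dt m x c + dt p x c * dx (dt m) x c) 0 1
                    (minus (dt p 1 c * dt m 1 c) (dt p 0 c * dt m 0 c))).
  { apply (is_RInt_derive (V := R_CompleteNormedModule) (fun x => dt p x c * dt m x c)).
    - intros x _. auto_derive.
      + split; eauto with regularity.
      + unfold dx; ring.
    - intros x _. auto_cont. }
  destruct (dt_p_boundary c Hc) as [H0 H1].
  rewrite H0, H1 in Hflux.
  apply (is_RInt_unique (V := R_CompleteNormedModule)) in Hflux. rewrite Hflux.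
  unfold minus, plus, opp; simpl. ring.
Qed.

(* Substituting [p_tt] and [m_tt] from the equations leaves the exact
   derivative [(p_t m_t)_x] and the signed damping term [d'(m) m_t^2]. *)
Lemma energy_derivative_nonpos c : 0 < c < T ->
  RInt (fun x => 2 * (dt p x c * dt (dt p) x c + dt m x c * dt (dt m) x c)) 0 1 <= 0.
Proof.
  intros Hc.
  rewrite (RInt_ext _ (fun x => -2 * (dx (dt p) x c * dt m x c + dt p x c * dx (dt m) x c)
                                + -2 * (Derive d (m x c) * dt m x c ^ 2))).
  2:{ intros x Hx. rewrite Rmin_left, Rmax_right in Hx by lra.
      rewrite dt_dt_p, dt_dt_m by auto. simpl. ring. }
  rewrite RInt_Rplus, !RInt_Rmult_l, RInt_flux_zero by (auto; ex_RInt_auto).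
  assert (0 <= RInt (fun x => Derive d (m x c) * dt m x c ^ 2) 0 1).
  { apply RInt01_const_le; [intro; auto_cont |]. intros x _.
    specialize (d'_gt (m x c)). pose proof (pow2_ge_0 (dt m x c)). nra. }
  lra.
Qed.

Lemma energy_nonincreasing t : 0 <= t <= T -> energy p m t <= energy p m 0.
Proof.
  intros Ht. destruct (Req_dec t 0) as [-> | Ht0]; [lra |].
  destruct (MVT_cor2 (energy p m)
              (fun c => RInt (fun x => 2 * (dt p x c * dt (dt p) x c
                                             + dt m x c * dt (dt m) x c)) 0 1) 0 t)
    as [c [Hc Hct]]; [lra | |].
  - intros c _. apply is_derive_Reals, is_derive_energy; auto.
  - pose proof (energy_derivative_nonpos c ltac:(lra)). nra.
Qed.

Lemma energy_split_nonneg t :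
  0 <= RInt (fun x => dt p x t ^ 2) 0 1 /\ 0 <= RInt (fun x => dt m x t ^ 2) 0 1
  /\ energy p m t = RInt (fun x => dt p x t ^ 2) 0 1 + RInt (fun x => dt m x t ^ 2) 0 1.
Proof.
  split; [| split]; [apply RInt_sq_ge0 | apply RInt_sq_ge0 | apply energy_split];
    intros; auto_cont.
Qed.

Lemma L2norm_fb_sq t : 0 <= t <= T ->
  L2norm fb ^ 2 = RInt (fun x => (dt p x t + dx m x t) ^ 2) 0 1.
Proof.
  intros Ht. apply L2norm_sq_ext; [| intro; auto_cont].
  intros x Hx. symmetry. apply mass_eq; auto.
Qed.

Lemma L2norm_gb_sq t : 0 <= t <= T ->
  L2norm gb ^ 2 = RInt (fun x => (dt m x t + dx p x t + d (m x t)) ^ 2) 0 1.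
Proof.
  intros Ht. apply L2norm_sq_ext; [| intro; auto_cont].
  intros x Hx. symmetry. apply momentum_eq; auto.
Qed.

Lemma energy0_le : 0 <= T ->
  energy p m 0 <= initial_energy_bound d (L2norm fb) (L2norm gb)
                    (H1norm (fun x => p x 0)) (H1norm (fun x => m x 0)).
Proof.
  intros HT. set (R0 := 1 + H1norm (fun x => m x 0) ^ 2).
  assert (Hdm : RInt (fun x => d (m x 0) ^ 2) 0 1 <= d R0 ^ 2 + d (- R0) ^ 2).
  { apply RInt01_le_const; [intro; auto_cont |]. intros x Hx.
    apply (d_sq_le d d0); auto. apply (Rabs_le_H1norm (fun y => m y 0)); eauto with regularity. }
  assert (Hpt : RInt (fun x => dt p x 0 ^ 2) 0 1
                <= 2 * L2norm fb ^ 2 + 2 * RInt (fun x => dx m x 0 ^ 2) 0 1).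
  { rewrite (L2norm_fb_sq 0) by lra.
    rewrite (RInt_ext _ (fun x => (dt p x 0 + dx m x 0 - dx m x 0) ^ 2))
      by (intros; simpl; ring).
    apply RInt_sq_sub_le; intro; auto_cont. }
  assert (Hmt : RInt (fun x => dt m x 0 ^ 2) 0 1
                <= 3 * (L2norm gb ^ 2 + RInt (fun x => dx p x 0 ^ 2) 0 1
                        + RInt (fun x => d (m x 0) ^ 2) 0 1)).
  { rewrite (L2norm_gb_sq 0) by lra.
    rewrite (RInt_ext _ (fun x => (dt m x 0 + dx p x 0 + d (m x 0) - dx p x 0 - d (m x 0)) ^ 2))
      by (intros; simpl; ring).
    apply RInt_sq_sub3_le; intro; auto_cont. }
  pose proof (RInt_dx_sq_le_H1norm p 0 (Ck2_S_Ck2 1 p p_C2)).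
  pose proof (RInt_dx_sq_le_H1norm m 0 (Ck2_S_Ck2 1 m m_C2)).
  destruct (energy_split_nonneg 0) as (_ & _ & ->).
  unfold initial_energy_bound. fold R0. lra.
Qed.

Lemma RInt_dx_m_sq_le t : 0 <= t <= T ->
  RInt (fun x => dx m x t ^ 2) 0 1 <= 2 * L2norm fb ^ 2 + 2 * energy p m t.
Proof.
  intros Ht. rewrite (L2norm_fb_sq t Ht).
  rewrite (RInt_ext _ (fun x => (dt p x t + dx m x t - dt p x t) ^ 2)) by (intros; simpl; ring).
  destruct (energy_split_nonneg t) as (_ & Hmt & ->).
  pose proof (RInt_sq_sub_le (fun x => dt p x t + dx m x t) (fun x => dt p x t)
                ltac:(intro; auto_cont) ltac:(intro; auto_cont)).
  lra.
Qed.

Lemma Rabs_RInt_d_m_le t : 0 <= t <= T ->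
  Rabs (RInt (fun x => d (m x t)) 0 1)
    <= 1 + (L2norm gb ^ 2 + energy p m t) / 2 + (Rabs h0 + Rabs h1).
Proof.
  intros Ht.
  set (G := fun x => dt m x t + dx p x t + d (m x t)).
  assert (Hpx : RInt (fun x => dx p x t) 0 1 = h1 - h0).
  { destruct (boundary t Ht) as [H0 H1].
    rewrite <- H0, <- H1. apply (RInt_Derive (fun x => p x t)); intros; eauto with regularity. }
  assert (Hsplit : RInt (fun x => d (m x t)) 0 1
                   = RInt G 0 1 - RInt (fun x => dt m x t) 0 1 - RInt (fun x => dx p x t) 0 1).
  { rewrite <- !RInt_Rminus by (unfold G; ex_RInt_auto).
    apply RInt_ext. intros x _. unfold G. simpl. ring. }
  pose proof (Rabs_RInt01_le_sq G ltac:(intro; unfold G; auto_cont)) as HG.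
  pose proof (Rabs_RInt01_le_sq (fun x => dt m x t) ltac:(intro; auto_cont)) as Hmt.
  pose proof (Rabs_triang (RInt G 0 1 - RInt (fun x => dt m x t) 0 1) (- (h1 - h0))).
  pose proof (Rabs_triang (RInt G 0 1) (- RInt (fun x => dt m x t) 0 1)).
  pose proof (Rabs_triang h1 (- h0)).
  destruct (energy_split_nonneg t) as (Hpt & _ & HE).
  rewrite Hsplit, Hpx. unfold G in *. rewrite <- (L2norm_gb_sq t Ht) in HG.
  rewrite Rabs_Ropp in *. unfold Rminus in *. lra.
Qed.

Lemma solution_norms_le t : 0 <= t <= T ->
  L2norm (fun x => dt p x t) + L2norm (fun x => dt m x t) + H1norm (fun x => m x t)
    <= solution_bound d d0 (L2norm fb) (L2norm gb) (Rabs h0 + Rabs h1)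
         (H1norm (fun x => p x 0)) (H1norm (fun x => m x 0)).
Proof.
  intros Ht. unfold solution_bound.
  set (E := initial_energy_bound d _ _ _ _).
  set (D := 2 * L2norm fb ^ 2 + 2 * E).
  set (B := 1 + (L2norm gb ^ 2 + E) / 2 + (Rabs h0 + Rabs h1)).
  assert (HE : energy p m t <= E).
  { eapply Rle_trans; [apply energy_nonincreasing, Ht | apply energy0_le; lra]. }
  destruct (energy_split_nonneg t) as (Hpt & Hmt & HEt).
  assert (HD : RInt (fun x => dx m x t ^ 2) 0 1 <= D).
  { pose proof (RInt_dx_m_sq_le t Ht). unfold D. lra. }
  assert (HB : Rabs (RInt (fun x => d (m x t)) 0 1) <= B).
  { pose proof (Rabs_RInt_d_m_le t Ht). unfold B. lra. }
  assert (Hsup : forall x, 0 <= x <= 1 -> Rabs (m x t) <= 1 + D + B / d0).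
  { replace (1 + D) with (2 * ((1 + D) / 2)) by field.
    apply (Rabs_le_of_osc_RInt_d d d0); auto; [intro; auto_cont |].
    intros x Hx.
    pose proof (Rabs_sub_le_RInt_Derive_sq (fun y => m y t)
                  ltac:(eauto with regularity) ltac:(eauto with regularity) x 0 Hx ltac:(lra)).
    unfold dx in HD. lra. }
  assert (Hm : RInt (fun x => m x t ^ 2) 0 1 <= (1 + D + B / d0) ^ 2).
  { apply RInt01_le_const; [intro; auto_cont |]. intros x Hx.
    rewrite <- (pow2_abs (m x t)). apply pow_incr. split; [apply Rabs_pos | auto]. }
  assert (HD0 : 0 <= RInt (fun x => dx m x t ^ 2) 0 1) by (apply RInt_sq_ge0; intro; auto_cont).
  assert (HS0 : 0 <= (1 + D + B / d0) ^ 2) by apply pow2_ge_0.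
  assert (Hpt' : L2norm (fun x => dt p x t) <= 1 + E) by (apply sqrt_le_1_plus; lra).
  assert (Hmt' : L2norm (fun x => dt m x t) <= 1 + E) by (apply sqrt_le_1_plus; lra).
  assert (Hm' : H1norm (fun x => m x t) <= 1 + ((1 + D + B / d0) ^ 2 + D)).
  { apply sqrt_le_1_plus; [cbv beta | lra].
    rewrite RInt_Rplus by (apply ex_RInt_cont; intro; auto_cont). unfold dx in *. lra. }
  lra.
Qed.

End DampedWaveSolution.

Theorem lemma2 :
  forall (d : R -> R) (d0 d1 d2 q : R),
    0 < d0 -> 0 <= d1 -> 0 <= d2 -> 0 <= q ->
    (forall y, ex_derive d y) -> (forall y, continuous (Derive d) y) ->
    d 0 = 0 ->
    (forall y, Derive d y > d0) ->
    (forall y, Rabs (Derive d y) <= d1 + d2 * rpow (Rabs y) q) ->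
  exists C : R -> R -> R -> R -> R -> R,
    forall (fb gb : R -> R) (h0 h1 T : R) (p m : R -> R -> R),
      0 < T ->
      smooth2 p -> smooth2 m ->
      (forall x t, 0 < x < 1 -> 0 <= t <= T ->
         dt p x t + dx m x t = fb x) ->
      (forall x t, 0 < x < 1 -> 0 <= t <= T ->
         dt m x t + dx p x t + d (m x t) = gb x) ->
      (forall t, 0 <= t <= T -> p 0 t = h0 /\ p 1 t = h1) ->
      forall t, 0 <= t <= T ->
        L2norm (fun x => dt p x t) + L2norm (fun x => dt m x t)
          + H1norm (fun x => m x t)
        <= C (L2norm fb) (L2norm gb) (Rabs h0 + Rabs h1)
             (H1norm (fun x => p x 0)) (H1norm (fun x => m x 0)).
Proof.
  intros d d0 d1 d2 q Hd0 _ _ _ Hd Hd' Hzero Hd'gt _.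
  exists (solution_bound d d0).
  intros fb gb h0 h1 T p m _ Hp Hm Hmass Hmomentum Hboundary t Ht.
  exact (solution_norms_le d d0 Hd Hd' Hd'gt Hd0 Hzero fb gb h0 h1 T p m
           (Hp 2%nat) (Hm 2%nat) Hmass Hmomentum Hboundary t Ht).
Qed.
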